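(* Let $E_1$ and $E_2$ be balanced equations in the unknowns $x_1,x_2,x_3$, and write $t_{jk}=t_{jk}^{E_1,E_2}$. Then there is a polynomial $t\in\mathbb Z[X_1,X_2,X_3]$ with $$(t_{23},t_{31},t_{12})=t\,(X_1-1,X_2-1,X_3-1).$$
   Context: An equation is a pair $E=(u,v)$ of words over $\{x_1,x_2,x_3\}$; it is balanced if $|u|_x=|v|_x$ for every unknown $x$. For $E=(x_{i_1}\cdots x_{i_r},\,x_{j_1}\cdots x_{j_s})$, $S_{E,x_j}=\sum_{a:\,i_a=j}\prod_{t=1}^{a-1}X_{i_t}-\sum_{a:\,j_a=j}\prod_{t=1}^{a-1}X_{j_t}\in\mathbb Z[X_1,X_2,X_3]$ (empty product $=1$), and $t_{jk}^{E,E'}=S_{E,x_j}S_{E',x_k}-S_{E',x_j}S_{E,x_k}$. *)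

(* Z[X1,X2,X3] is modelled as the iterated polynomial ring
   {poly {poly {poly int}}} (canonically isomorphic). *)
From HB Require Import structures.
From mathcomp Require Import all_boot all_order all_algebra.
Set Implicit Arguments. Unset Strict Implicit. Unset Printing Implicit Defensive.
Import Order.TTheory GRing.Theory Num.Theory.
Local Open Scope ring_scope.

Definition ZX3 : Type := {poly {poly {poly int}}}.

(* the variables: index 0,1,2 : 'I_3 stand for x_1, x_2, x_3 *)
Definition Xvar (i : 'I_3) : ZX3 :=
  match val i with
  | 0%N => ('X%:P)%:P
  | 1%N => 'X%:P
  | _ => 'X
  end.

Definition word := seq 'I_3.
Definition equation := (word * word)%type.

Definition balanced (E : equation) : Prop :=
  forall x : 'I_3, count_mem x E.1 = count_mem x E.2.

Definition Sword (w : word) (j : 'I_3) : ZX3 :=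
  \sum_(a < size w | nth ord0 w a == j)
     \prod_(t < a) Xvar (nth ord0 w t).

Definition S (E : equation) (j : 'I_3) : ZX3 := Sword E.1 j - Sword E.2 j.

Definition tcoef (E E' : equation) (j k : 'I_3) : ZX3 :=
  S E j * S E' k - S E' j * S E k.

Definition i1 : 'I_3 := @Ordinal 3 0 isT.
Definition i2 : 'I_3 := @Ordinal 3 1 isT.
Definition i3 : 'I_3 := @Ordinal 3 2 isT.

(* A balanced equation E = (u, v) satisfies the fundamental formula of Fox
   calculus  sum_j S_{E,x_j} (X_j - 1) = X^u - X^v,  and X^u = X^v because u and
   v are permutations of each other.  Hence S_{E1} and S_{E2} are both orthogonal
   to a = (X_1 - 1, X_2 - 1, X_3 - 1), and their cross product c = (t_23, t_31,
   t_12) satisfies c_3 a_i = c_i a_3.  Seeing Z[X_1,X_2,X_3] as polynomials in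
   X_3 and evaluating at X_3 = 1 shows that X_3 - 1 divides c_3 = t (X_3 - 1),
   and cancelling a_3 gives c_i = t a_i for the other two components. *)
From HB Require Import structures.
From mathcomp Require Import all_boot all_order all_algebra.
From mathcomp Require Import ring.
Import GRing.Theory.
Local Open Scope ring_scope.

Lemma sum_prod_telescope (R : comNzRingType) (g : nat -> R) (n : nat) :
  \sum_(a < n) (\prod_(t < a) g t) * (g a - 1) = \prod_(t < n) g t - 1.
Proof.
elim: n => [|n IHn]; first by rewrite !big_ord0 subrr.
by rewrite big_ord_recr /= IHn [in RHS]big_ord_recr /=; ring.
Qed.

Lemma fox_fundamental_formula (T : finType) (R : comNzRingType)
    (x : T -> R) (x0 : T) (w : seq T) :
  \sum_(j : T) (\sum_(a < size w | nth x0 w a == j) \prod_(t < a) x (nth x0 w t))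
               * (x j - 1)
  = \prod_(y <- w) x y - 1.
Proof.
under [LHS]eq_bigr => j _ do rewrite mulr_suml big_mkcond.
rewrite exchange_big (big_nth x0) big_mkord.
rewrite -(@sum_prod_telescope _ (fun t => x (nth x0 w t))).
apply: eq_bigr => a _.
rewrite (bigD1 (nth x0 w a)) //= eqxx [X in _ + X]big1 ?addr0 //.
by move=> j; rewrite eq_sym => /negbTE ->.
Qed.

Lemma Sword_fundamental (w : word) :
  \sum_(j < 3) Sword w j * (Xvar j - 1) = \prod_(x <- w) Xvar x - 1.
Proof. exact: fox_fundamental_formula. Qed.

Lemma S_fundamental (E : equation) :
  \sum_(j < 3) S E j * (Xvar j - 1) = \prod_(x <- E.1) Xvar x - \prod_(x <- E.2) Xvar x.
Proof.
rewrite -[RHS](subrKA 1) -[1 - _]opprB.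
rewrite -(Sword_fundamental E.1) -(Sword_fundamental E.2) -sumrB.
by apply: eq_bigr => j _; rewrite /S mulrBl.
Qed.

Lemma balanced_perm_eq {E : equation} : balanced E -> perm_eq E.1 E.2.
Proof. by move=> balE; apply/allP => x _; apply/eqP; exact: balE. Qed.

Lemma big_ord3 (V : nmodType) (F : 'I_3 -> V) :
  \sum_(j < 3) F j = F i1 + F i2 + F i3.
Proof.
rewrite !big_ord_recl big_ord0 addr0 addrA.
by congr (F _ + F _ + F _); apply: val_inj.
Qed.

Lemma balanced_S_orthogonal {E : equation} : balanced E ->
  S E i1 * (Xvar i1 - 1) + S E i2 * (Xvar i2 - 1) + S E i3 * (Xvar i3 - 1) = 0.
Proof.
move=> balE; rewrite -(@big_ord3 _ (fun j => S E j * (Xvar j - 1))).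
by rewrite S_fundamental (perm_big _ (balanced_perm_eq balE)) subrr.
Qed.

Lemma cross_orthogonal {R : comNzRingType} {s1 s2 s3 r1 r2 r3 a1 a2 a3 : R} :
  s1 * a1 + s2 * a2 + s3 * a3 = 0 -> r1 * a1 + r2 * a2 + r3 * a3 = 0 ->
  (s1 * r2 - r1 * s2) * a1 = (s2 * r3 - r2 * s3) * a3 /\
  (s1 * r2 - r1 * s2) * a2 = (s3 * r1 - r3 * s1) * a3.
Proof.
move=> s_a r_a; split; apply/eqP; rewrite -subr_eq0; apply/eqP.
- transitivity (r2 * (s1 * a1 + s2 * a2 + s3 * a3)
                - s2 * (r1 * a1 + r2 * a2 + r3 * a3)); first by ring.
  by rewrite s_a r_a !mulr0 subrr.
- transitivity (s1 * (r1 * a1 + r2 * a2 + r3 * a3)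
                - r1 * (s1 * a1 + s2 * a2 + s3 * a3)); first by ring.
  by rewrite s_a r_a !mulr0 subrr.
Qed.

Lemma XsubC_dvd_mulC {R : idomainType} {p q : {poly R}} {b c : R} :
  b != 0 -> p * b%:P = q * ('X - c%:P) -> exists t, p = t * ('X - c%:P).
Proof.
move=> b_neq0 /(congr1 (horner^~ c)).
rewrite !hornerM hornerC hornerXsubC subrr mulr0 => /eqP.
rewrite mulf_eq0 (negbTE b_neq0) orbF => /eqP p_c.
by have /factor_theorem : root p c by apply/eqP.
Qed.

Lemma cross_orthogonal_XsubC {R : idomainType}
    {s1 s2 s3 r1 r2 r3 : {poly R}} {b1 b2 c : R} :
  b1 != 0 ->
  s1 * b1%:P + s2 * b2%:P + s3 * ('X - c%:P) = 0 ->
  r1 * b1%:P + r2 * b2%:P + r3 * ('X - c%:P) = 0 ->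
  exists t, [/\ s2 * r3 - r2 * s3 = t * b1%:P,
                s3 * r1 - r3 * s1 = t * b2%:P &
                s1 * r2 - r1 * s2 = t * ('X - c%:P)].
Proof.
move=> b1_neq0 s_a r_a.
have [cross1 cross2] := cross_orthogonal s_a r_a.
have [t cross3] := XsubC_dvd_mulC b1_neq0 cross1.
have /mulIf cancel_a3 : 'X - c%:P != 0 :> {poly R} by rewrite polyXsubC_eq0.
exists t; split=> //; apply: cancel_a3.
- by rewrite -cross1 cross3 mulrAC.
- by rewrite -cross2 cross3 mulrAC.
Qed.

Theorem corollary4p11 (E1 E2 : equation) :
  balanced E1 -> balanced E2 ->
  exists t : ZX3,
    [/\ tcoef E1 E2 i2 i3 = t * (Xvar i1 - 1),
        tcoef E1 E2 i3 i1 = t * (Xvar i2 - 1) &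
        tcoef E1 E2 i1 i2 = t * (Xvar i3 - 1)].
Proof.
move=> /balanced_S_orthogonal S1_a /balanced_S_orthogonal S2_a.
have a1E : Xvar i1 - 1 = ('X - 1)%:P%:P by rewrite /= !polyCB.
have a2E : Xvar i2 - 1 = ('X - 1)%:P by rewrite /= polyCB.
have a3E : Xvar i3 - 1 = 'X - 1%:P by [].
have b1_neq0 : ('X - 1)%:P != 0 :> {poly {poly int}}.
  by rewrite polyC_eq0 polyXsubC_eq0.
rewrite a1E a2E a3E in S1_a S2_a *.
exact: cross_orthogonal_XsubC b1_neq0 S1_a S2_a.
Qed.
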